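(* Let $(X,d)$ be a compact metric space and $\mathcal{W}$ a uniformly bounded open cover of $X$. If $U$ is an open subset of $X$, then $P_U$ is open in $\mathrm{Viet}^{\mathrm{m}}(\mathcal{W})$. If $\mathcal{U}=\{U_1,\dots,U_n\}$ is a collection of open subsets of $X$, then $P_{\mathcal{U}}$ is open in $\mathrm{Viet}^{\mathrm{m}}(\mathcal{W})$.
   Context: $\mathrm{Viet}^{\mathrm{m}}(\mathcal{W})$ is the set of finitely supported probability measures on $X$ whose support is contained in some element of $\mathcal{W}$, with the $1$-Wasserstein metric. For $U\subseteq X$, $P_U=\{\mu\in\mathrm{Viet}^{\mathrm{m}}(\mathcal{W}) : \mathrm{supp}(\mu)\cap U\neq\varnothing\}$, and for a finite collection $\mathcal{U}=\{U_1,\dots,U_n\}$, $P_{\mathcal{U}}=\bigcap_{i=1}^nP_{U_i}$. *)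

From mathcomp Require Import all_boot all_order all_algebra.
From mathcomp Require Import all_classical all_reals.
Set Implicit Arguments. Unset Strict Implicit. Unset Printing Implicit Defensive.
Import Order.TTheory GRing.Theory Num.Theory.
Local Open Scope classical_set_scope.
Local Open Scope ring_scope.

Section Defs.
Variables (R : realType) (X : choiceType) (d : X -> X -> R).

Definition is_metric : Prop :=
  [/\ forall x y, 0 <= d x y,
      forall x y, d x y = 0 <-> x = y,
      forall x y, d x y = d y x &
      forall x y z, d x z <= d x y + d y z].

Definition metric_open (U : set X) : Prop :=
  forall x, U x -> exists2 e : R, 0 < e & forall y, d x y < e -> U y.

Definition metric_compact : Prop :=
  forall C : set (set X),
    (forall A, C A -> metric_open A) ->
    (forall x, exists A, C A /\ A x) ->
    exists n (f : nat -> set X),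
      (forall i, (i < n)%N -> C (f i)) /\
      (forall x, exists i, (i < n)%N /\ f i x).

Definition open_cover (Wc : set (set X)) : Prop :=
  (forall W, Wc W -> metric_open W) /\ (forall x, exists W, Wc W /\ W x).

Definition uniformly_bounded (Wc : set (set X)) : Prop :=
  exists M : R, forall W, Wc W -> forall x y, W x -> W y -> d x y <= M.

(* finitely supported probability measures, given by their mass functions *)
Definition fin_prob (mu : X -> R) : Prop :=
  (forall x, 0 <= mu x) /\
  exists S : seq X, [/\ uniq S, (forall x, 0 < mu x -> x \in S) &
                        \sum_(x <- S) mu x = 1].

Definition supp (mu : X -> R) : set X := [set x | 0 < mu x].

Definition coupling (mu nu : X -> R) (pi : X -> X -> R) (S : seq X) : Prop :=
  [/\ uniq S, (forall x y, 0 <= pi x y),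
      (forall x y, pi x y != 0 -> x \in S /\ y \in S),
      (forall x, \sum_(y <- S) pi x y = mu x) &
      (forall y, \sum_(x <- S) pi x y = nu y)].

Definition transport_cost (pi : X -> X -> R) (S : seq X) : R :=
  \sum_(x <- S) \sum_(y <- S) pi x y * d x y.

Definition W1 (mu nu : X -> R) : R :=
  inf [set c | exists pi S, coupling mu nu pi S /\ c = transport_cost pi S].

Definition VietM (Wc : set (set X)) : set (X -> R) :=
  [set mu | fin_prob mu /\ exists2 W, Wc W & supp mu `<=` W].

Definition VietM_open (Wc : set (set X)) (A : set (X -> R)) : Prop :=
  A `<=` VietM Wc /\
  forall mu, A mu -> exists2 e : R, 0 < e &
    forall nu, VietM Wc nu -> W1 mu nu < e -> A nu.

Definition P_set (Wc : set (set X)) (U : set X) : set (X -> R) :=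
  [set mu | VietM Wc mu /\ supp mu `&` U !=set0].

Definition P_fam (Wc : set (set X)) (n : nat) (Us : 'I_n -> set X) :
  set (X -> R) :=
  [set mu | VietM Wc mu /\ forall i, P_set Wc (Us i) mu].

End Defs.

From mathcomp Require Import all_boot all_order all_algebra.
From mathcomp Require Import all_classical all_reals.
Set Implicit Arguments. Unset Strict Implicit. Unset Printing Implicit Defensive.
Import Order.TTheory GRing.Theory Num.Theory.
Local Open Scope classical_set_scope.
Local Open Scope ring_scope.

(* If [x0] lies in [supp mu ∩ U] and the ball of radius [r] around [x0] is
   contained in [U], then a measure [nu] whose support misses [U] has all its
   mass at distance [>= r] from [x0]; every coupling of [mu] and [nu] must move
   the mass [mu x0] at least that far, so [W1 mu nu >= mu x0 * r].  Hence the
   [W1]-ball of radius [mu x0 * r] around [mu] lies in [P_U].  For finitely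
   many open sets take the minimum of the radii. *)

Lemma sumr_supp_subset (T : eqType) (R : numDomainType) (f : T -> R)
    (s t : seq T) :
  (forall x, 0 <= f x) -> (forall x, 0 < f x -> x \in s) ->
  uniq s -> uniq t -> {subset s <= t} ->
  \sum_(x <- t) f x = \sum_(x <- s) f x.
Proof.
move=> f_ge0 f_supp uniq_s uniq_t sub_st.
rewrite (bigID (mem s)) /= [X in _ + X]big1 ?addr0; last first.
  move=> x x_notin_s; apply: contraNeq x_notin_s => fx_neq0.
  by rewrite f_supp // lt_def fx_neq0 f_ge0.
rewrite -big_filter; apply/perm_big/uniq_perm => //; first exact: filter_uniq.
by move=> x; rewrite mem_filter; case: (boolP (x \in s)) => //= /sub_st ->.
Qed.

Section Wasserstein.
Variables (R : realType) (X : choiceType) (d : X -> X -> R).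
Hypothesis d_ge0 : forall x y, 0 <= d x y.

Lemma exists_coupling (mu nu : X -> R) : fin_prob mu -> fin_prob nu ->
  exists pi S, coupling mu nu pi S.
Proof.
move=> [mu_ge0 [Smu [uniq_mu mu_supp mu_sum]]].
move=> [nu_ge0 [Snu [uniq_nu nu_supp nu_sum]]].
have uniq_S : uniq (undup (Smu ++ Snu)) by exact: undup_uniq.
exists (fun x y => mu x * nu y), (undup (Smu ++ Snu)); split => //.
- by move=> x y; rewrite mulr_ge0.
- move=> x y; rewrite mulf_eq0 negb_or => /andP[mu_x nu_y].
  have /mu_supp x_Smu : 0 < mu x by rewrite lt_def mu_x mu_ge0.
  have /nu_supp y_Snu : 0 < nu y by rewrite lt_def nu_y nu_ge0.
  by rewrite !mem_undup !mem_cat x_Smu y_Snu orbT.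
- move=> x; rewrite -big_distrr /= (@sumr_supp_subset _ _ nu Snu) ?nu_sum ?mulr1 //.
  by move=> y y_nu; rewrite mem_undup mem_cat y_nu orbT.
- move=> y; rewrite -big_distrl /= (@sumr_supp_subset _ _ mu Smu) ?mu_sum ?mul1r //.
  by move=> x x_mu; rewrite mem_undup mem_cat x_mu.
Qed.

Lemma transport_cost_ge_far (mu nu : X -> R) (x0 : X) (r : R) pi S :
  0 < mu x0 -> (forall y, 0 < nu y -> r <= d x0 y) ->
  coupling mu nu pi S -> mu x0 * r <= transport_cost d pi S.
Proof.
move=> mu_x0 nu_far [uniq_S pi_ge0 pi_supp pi_mu pi_nu].
have x0_S : x0 \in S.
  apply: contraTT mu_x0 => x0_notin_S.
  rewrite -pi_mu big1 ?ltxx // => y _; apply: contraNeq x0_notin_S.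
  by case/pi_supp.
rewrite /transport_cost (bigD1_seq x0) //= -[leLHS]addr0 lerD //; last first.
  by rewrite !sumr_ge0 // => x _; rewrite sumr_ge0 // => y _; rewrite mulr_ge0.
rewrite -pi_mu big_distrl /=; apply: ler_sum => y _.
have [->|pi_neq0] := eqVneq (pi x0 y) 0; first by rewrite !mul0r.
have pi_gt0 : 0 < pi x0 y by rewrite lt_def pi_neq0 pi_ge0.
rewrite ler_wpM2l // nu_far // -pi_nu (bigD1_seq x0) //=.
by rewrite (lt_le_trans pi_gt0) // lerDl sumr_ge0.
Qed.

Lemma W1_ge_far (mu nu : X -> R) (x0 : X) (r : R) :
  fin_prob mu -> fin_prob nu ->
  0 < mu x0 -> (forall y, 0 < nu y -> r <= d x0 y) ->
  mu x0 * r <= W1 d mu nu.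
Proof.
move=> fin_mu fin_nu mu_x0 nu_far; apply: lb_le_inf.
  have [pi [S pi_coupling]] := exists_coupling fin_mu fin_nu.
  by exists (transport_cost d pi S), pi, S.
by move=> _ [pi [S [pi_coupling ->]]]; exact: transport_cost_ge_far pi_coupling.
Qed.

Lemma P_set_open (Wc : set (set X)) (U : set X) :
  metric_open d U -> VietM_open d Wc (P_set Wc U).
Proof.
move=> U_open; split=> [mu []//|mu [[fin_mu _] [x0 [mu_x0 U_x0]]]].
have [r r_gt0 ball_U] := U_open x0 U_x0.
exists (mu x0 * r); first by rewrite mulr_gt0.
move=> nu V_nu W1_lt; split=> //; apply: contrapT => supp_nu_U0.
have [fin_nu _] := V_nu.
have nu_far y : 0 < nu y -> r <= d x0 y.
  move=> nu_y; rewrite leNgt; apply/negP => /ball_U U_y.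
  by apply: supp_nu_U0; exists y.
by move: W1_lt; rewrite ltNge W1_ge_far.
Qed.

Lemma VietM_open_bigcap (Wc : set (set X)) (I : finType)
    (A : I -> set (X -> R)) :
  (forall i, VietM_open d Wc (A i)) ->
  VietM_open d Wc [set mu | VietM Wc mu /\ forall i, A i mu].
Proof.
move=> A_open; split=> [mu []//|mu [V_mu A_mu]].
have /choice[e e_spec] : forall i, exists e : R, 0 < e /\
    forall nu, VietM Wc nu -> W1 d mu nu < e -> A i nu.
  by move=> i; have [_ /(_ mu (A_mu i))[e e_gt0 e_ball]] := A_open i; exists e.
exists (\big[Order.min/1]_i e i).
  by apply: lt_bigmin => // i _; case: (e_spec i).
move=> nu V_nu W1_lt; split=> // i; case: (e_spec i) => _; apply=> //.
exact: lt_le_trans W1_lt (bigmin_le _ _ _).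
Qed.

End Wasserstein.

Theorem proposition4p5 (R : realType) (X : choiceType) (d : X -> X -> R)
  (Wc : set (set X)) :
  is_metric d -> metric_compact d ->
  open_cover d Wc -> uniformly_bounded d Wc ->
  (forall U : set X, metric_open d U -> VietM_open d Wc (P_set Wc U)) /\
  (forall (n : nat) (Us : 'I_n -> set X),
      (forall i, metric_open d (Us i)) -> VietM_open d Wc (P_fam Wc Us)).
Proof.
move=> [d_ge0 _ _ _] _ _ _; split=> [U|n Us Us_open]; first exact: P_set_open.
by apply: VietM_open_bigcap => i; exact: P_set_open.
Qed.
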